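(* Let $n$ be an even positive integer, $a,b\in\mathbb{C}$, $b\ne0$. Let $A^{\dagger}$ be the $n\times n$ tridiagonal matrix with diagonal entries $a$ and $A^{\dagger}_{k,k+1}=A^{\dagger}_{k+1,k}=(-1)^{k+1}b$ for $k=1,\dots,n-1$, let $\tilde J^{\dagger}$ be the $n\times n$ exchange matrix ($\tilde J^{\dagger}_{i,n+1-i}=1$, all other entries $0$), and let $\tilde A^{\dagger}$ be the anti-tridiagonal matrix with entries $\tilde A^{\dagger}_{ij}=A^{\dagger}_{n+1-i,j}$ (i.e. $\tilde A^{\dagger}=\tilde J^{\dagger}A^{\dagger}$; its first row is $(0,\dots,0,b,a)$, its second row $(0,\dots,0,-b,a,b)$, etc.). Then for every positive integer $s$, $$(\tilde A^{\dagger})^s=\begin{cases}(A^{\dagger})^s, & s \text{ even},\\ \tilde J^{\dagger}(A^{\dagger})^s, & s\text{ odd}.\end{cases}$$ *)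

From HB Require Import structures.
From mathcomp Require Import all_boot all_order all_algebra.
From mathcomp Require Import complex reals.
Set Implicit Arguments. Unset Strict Implicit. Unset Printing Implicit Defensive.
Import Order.TTheory GRing.Theory Num.Theory.
Local Open Scope ring_scope.

(* Indices are 0-based: the paper's entry (k, l) is entry (k-1, l-1) here. *)

(* A^dagger: diagonal a, super/sub-diagonal entries (k,k+1),(k+1,k) equal to
   (-1)^(k+1) b for the 1-based k; with 0-based i = k-1 this is (-1)^i b. *)
Definition Adag {C : pzRingType} (n : nat) (a b : C) : 'M[C]_n :=
  \matrix_(i < n, j < n)
    if i == j :> nat then a
    else if j == i.+1 :> nat then (-1) ^+ i * b
    else if i == j.+1 :> nat then (-1) ^+ j * b
    else 0.

(* Exchange matrix: 1 at (i, n+1-i) 1-based, i.e. i + j = n - 1 0-based. *)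
Definition Jdag {C : pzRingType} (n : nat) : 'M[C]_n :=
  \matrix_(i < n, j < n) if (i + j == n.-1)%N then 1 else 0.

Definition Atdag {C : pzRingType} (n : nat) (a b : C) : 'M[C]_n :=
  \matrix_(i < n, j < n) Adag n a b (rev_ord i) j.

From HB Require Import structures.
From mathcomp Require Import all_boot all_order all_algebra.
From mathcomp Require Import complex reals.
From mathcomp Require Import zify.
Import Order.TTheory GRing.Theory Num.Theory.
Local Open Scope ring_scope.
Local Open Scope complex_scope.

(* Since tilde A = J A, the identity follows from J^2 = 1 once J and A
   commute, i.e. once A is persymmetric: A_{n-1-i, j} = A_{i, n-1-j}.  This
   reflection exchanges the off-diagonal entries (k, k+1) and (n-2-k, n-1-k),
   whose signs (-1)^k and (-1)^(n-2-k) agree exactly because n is even. *)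

Lemma eq_signr_even (R : pzRingType) (p q : nat) :
  ~~ odd (p + q) -> (-1) ^+ p = (-1) ^+ q :> R.
Proof.
rewrite oddD -signr_odd -[RHS]signr_odd.
by case: (odd p) (odd q) => [] [].
Qed.

Section ExchangeMatrix.
Variable C : pzRingType.

Lemma mul_Jdag_mx n m (M : 'M[C]_(n, m)) i j :
  (Jdag n *m M) i j = M (rev_ord i) j.
Proof.
rewrite !mxE (bigD1 (rev_ord i)) //= big1 ?addr0.
  by rewrite mxE /= ifT ?mul1r //; apply/eqP; have := ltn_ord i; lia.
move=> k /eqP k_neq; rewrite mxE ifF ?mul0r //; apply/negbTE/eqP => ik.
by apply: k_neq; apply: val_inj => /=; lia.
Qed.

Lemma mul_mx_Jdag n m (M : 'M[C]_(m, n)) i j :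
  (M *m Jdag n) i j = M i (rev_ord j).
Proof.
rewrite !mxE (bigD1 (rev_ord j)) //= big1 ?addr0.
  by rewrite mxE /= ifT ?mulr1 //; apply/eqP; have := ltn_ord j; lia.
move=> k /eqP k_neq; rewrite mxE ifF ?mulr0 //; apply/negbTE/eqP => kj.
by apply: k_neq; apply: val_inj => /=; lia.
Qed.

Lemma Jdag_invol n : Jdag n *m Jdag n = 1%:M :> 'M[C]_n.
Proof.
apply/matrixP => i j; rewrite mul_Jdag_mx !mxE /=.
suff -> : (n - i.+1 + j == n.-1)%N = (i == j) by case: (i == j).
move: (ltn_ord i) (ltn_ord j) => lt_in lt_jn.
by apply/eqP/eqP => [ij | ->]; [apply: val_inj => /=|]; lia.
Qed.

Lemma Jdag_expr n s :
  (Jdag n : 'M[C]_n) ^+ s = if odd s then Jdag n else 1.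
Proof.
elim: s => [|s IHs]; first by rewrite expr0.
rewrite exprS IHs /=; case: (odd s) => /=; last by rewrite mulr1.
by rewrite -mulmxE Jdag_invol.
Qed.

End ExchangeMatrix.

Section Persymmetry.
Variables (C : pzRingType) (n : nat) (a b : C).
Hypothesis n_even : ~~ odd n.

Lemma Adag_rev i j :
  Adag n a b (rev_ord i) j = Adag n a b i (rev_ord j).
Proof.
have [m n_eq] : exists m, n = m.*2.
  by exists n./2; rewrite -[LHS]odd_double_half (negbTE n_even).
rewrite !mxE /=; move: (ltn_ord i) (ltn_ord j).
move: (nat_of_ord i) (nat_of_ord j) => {}i {}j ltin ltjn.
have -> : (n - i.+1 == j)%N = (i == n - j.+1)%N by apply/eqP/eqP; lia.
have -> : (j == (n - i.+1).+1)%N = (i == (n - j.+1).+1)%N by apply/eqP/eqP; lia.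
have -> : (n - i.+1 == j.+1)%N = (n - j.+1 == i.+1)%N by apply/eqP/eqP; lia.
case: eqP => // _.
case: eqP => [i_eq|_]; case: eqP => [j_eq|_] //; first lia.
- congr (_ * _); apply: eq_signr_even.
  have -> : (n - i.+1 + (n - j.+1) = (m - 1).*2)%N by lia.
  by rewrite odd_double.
- congr (_ * _); apply: eq_signr_even.
  have -> : (j + i = (m - 1).*2)%N by lia.
  by rewrite odd_double.
Qed.

Lemma Jdag_Adag_comm : Jdag n *m Adag n a b = Adag n a b *m Jdag n.
Proof.
by apply/matrixP => i j; rewrite mul_Jdag_mx mul_mx_Jdag Adag_rev.
Qed.

End Persymmetry.

Lemma Atdag_Jdag (C : pzRingType) n (a b : C) :
  Atdag n a b = Jdag n *m Adag n a b.
Proof. by apply/matrixP => i j; rewrite mul_Jdag_mx mxE. Qed.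

Lemma Atdag_expr (C : pzRingType) n (a b : C) s : ~~ odd n ->
  Atdag n a b ^+ s = Jdag n ^+ s * Adag n a b ^+ s.
Proof.
move=> n_even; rewrite Atdag_Jdag mulmxE exprMn_comm //.
by rewrite /GRing.comm -!mulmxE Jdag_Adag_comm.
Qed.

Theorem lemma5 (R : realType) (n : nat) (hn : ~~ odd n.+1)
    (a b : R[i]) (hb : b != 0) (s : nat) (hs : (0 < s)%N) :
  (Atdag n.+1 a b) ^+ s =
    (if odd s then Jdag n.+1 *m (Adag n.+1 a b) ^+ s
     else (Adag n.+1 a b) ^+ s).
Proof.
by rewrite Atdag_expr // Jdag_expr; case: (odd s); rewrite ?mulmxE ?mul1r.
Qed.
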